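(* Let $(X,d)$ be a complete metric space and let $\mathcal{F}=\{X; f_{\lambda}\mid\lambda\in\Lambda\}$ be a parameterized iterated function system which is uniformly contracting. Then $\mathcal{F}$ has the average shadowing property on $\mathbb{Z}_+$.
   Context: A parameterized iterated function system (IFS) $\mathcal{F}=\{X; f_{\lambda}\mid\lambda\in\Lambda\}$ on a complete metric space $(X,d)$ is a family of continuous maps $f_\lambda:X\to X$ indexed by a finite nonempty set $\Lambda$. It is uniformly contracting if $\beta=\sup_{\lambda\in\Lambda}\sup_{x\ne y}\frac{d(f_\lambda(x),f_\lambda(y))}{d(x,y)}$ exists and $\beta<1$. For $\sigma=(\lambda_0,\lambda_1,\dots)\in\Lambda^{\mathbb{Z}_+}$ write $\mathcal{F}_{\sigma_n}=f_{\lambda_{n-1}}\circ\cdots\circ f_{\lambda_0}$ for $n\ge1$ and $\mathcal{F}_{\sigma_0}=\mathrm{id}_X$. For $\delta>0$, a sequence $(x_i)_{i\ge0}$ in $X$ is a $\delta$-average pseudo-orbit of $\mathcal{F}$ if there exist a natural number $N$ and $\sigma=(\lambda_0,\lambda_1,\dots)\in\Lambda^{\mathbb{Z}_+}$ such that for all $n\ge N$, $\frac1n\sum_{i=0}^{n-1}d(f_{\lambda_i}(x_i),x_{i+1})<\delta$. A sequence $(x_i)_{i\ge0}$ is $\epsilon$-shadowed in average by $z\in X$ if there exists $\sigma\in\Lambda^{\mathbb{Z}_+}$ with $\limsup_{n\to\infty}\frac1n\sum_{i=0}^{n-1}d(\mathcal{F}_{\sigma_i}(z),x_i)<\epsilon$.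 $\mathcal{F}$ has the average shadowing property (on $\mathbb{Z}_+$) if for every $\epsilon>0$ there is $\delta>0$ such that every $\delta$-average pseudo-orbit of $\mathcal{F}$ is $\epsilon$-shadowed in average by some point of $X$. *)

From Stdlib Require Import Reals List.
From Coquelicot Require Import Coquelicot.
Open Scope R_scope.

Record MetricSpace := {
  carrier :> Type;
  dist : carrier -> carrier -> R;
  dist_nonneg : forall x y, 0 <= dist x y;
  dist_eq0 : forall x y, dist x y = 0 <-> x = y;
  dist_sym : forall x y, dist x y = dist y x;
  dist_tri : forall x y z, dist x z <= dist x y + dist y z
}.

Definition cauchy_seq (M : MetricSpace) (u : nat -> M) : Prop :=
  forall eps, 0 < eps -> exists N, forall m n, (N <= m)%nat -> (N <= n)%nat ->
    dist M (u m) (u n) < eps.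

Definition converges_to (M : MetricSpace) (u : nat -> M) (l : M) : Prop :=
  forall eps, 0 < eps -> exists N, forall n, (N <= n)%nat -> dist M (u n) l < eps.

Definition complete (M : MetricSpace) : Prop :=
  forall u : nat -> M, cauchy_seq M u -> exists l, converges_to M u l.

Definition metric_continuous (M : MetricSpace) (f : M -> M) : Prop :=
  forall x eps, 0 < eps -> exists delta, 0 < delta /\
    forall y, dist M x y < delta -> dist M (f x) (f y) < eps.

Definition finite_nonempty (Lam : Type) : Prop :=
  (exists l : list Lam, forall a : Lam, In a l) /\ inhabited Lam.

Definition uniformly_contracting (M : MetricSpace) (Lam : Type) (f : Lam -> M -> M) : Prop :=
  exists beta : R,
    is_lub (fun r => exists (lam : Lam) (x y : M), x <> y /\
              r = dist M (f lam x) (f lam y) / dist M x y) beta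
    /\ beta < 1.

Fixpoint rsum (g : nat -> R) (n : nat) : R :=
  match n with
  | O => 0
  | S k => rsum g k + g k
  end.

Fixpoint Fsigma (M : MetricSpace) (Lam : Type) (f : Lam -> M -> M)
    (sigma : nat -> Lam) (n : nat) (x : M) : M :=
  match n with
  | O => x
  | S k => f (sigma k) (Fsigma M Lam f sigma k x)
  end.

Definition avg_pseudo_orbit (M : MetricSpace) (Lam : Type) (f : Lam -> M -> M)
    (delta : R) (xs : nat -> M) : Prop :=
  exists (N : nat) (sigma : nat -> Lam), forall n : nat, (N <= n)%nat ->
    / INR n * rsum (fun i => dist M (f (sigma i) (xs i)) (xs (S i))) n < delta.

Definition avg_shadowed (M : MetricSpace) (Lam : Type) (f : Lam -> M -> M)
    (eps : R) (xs : nat -> M) (z : M) : Prop :=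
  exists sigma : nat -> Lam,
    Rbar_lt (LimSup_seq (fun n => / INR n *
               rsum (fun i => dist M (Fsigma M Lam f sigma i z) (xs i)) n))
            (Finite eps).

Definition average_shadowing (M : MetricSpace) (Lam : Type) (f : Lam -> M -> M) : Prop :=
  forall eps, 0 < eps -> exists delta, 0 < delta /\
    forall xs : nat -> M, avg_pseudo_orbit M Lam f delta xs ->
      exists z : M, avg_shadowed M Lam f eps xs z.

(* The pseudo-orbit is shadowed by its own initial point x_0, along the same
   sequence of maps.  With D_i = d(F_{sigma_i} x_0, x_i) and
   e_i = d(f_{lambda_i} x_i, x_{i+1}), contraction gives
   D_{i+1} <= beta D_i + e_i, and summing (D_0 = 0) yields
   (1 - beta) sum_{i<n} D_i <= sum_{i<n} e_i: the shadowing averages are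
   controlled by the pseudo-orbit averages. *)
From Pilot Require Import Defs.
From Stdlib Require Import Reals Lra Lia.
From Coquelicot Require Import Coquelicot.
Open Scope R_scope.

Lemma dist_refl (M : MetricSpace) (x : M) : Defs.dist M x x = 0.
Proof. now apply Defs.dist_eq0. Qed.

Lemma uniformly_contracting_lipschitz (M : MetricSpace) (Lam : Type)
    (f : Lam -> M -> M) :
  uniformly_contracting M Lam f ->
  exists b, 0 <= b < 1 /\
    forall lam x y, Defs.dist M (f lam x) (f lam y) <= b * Defs.dist M x y.
Proof.
  intros [beta [[Hub _] Hbeta]].
  exists (Rmax beta 0); split; [split; [apply Rmax_r | apply Rmax_lub_lt; lra]|].
  intros lam x y.
  destruct (Req_dec (Defs.dist M x y) 0) as [Hxy | Hxy].
  - apply Defs.dist_eq0 in Hxy; subst y.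
    rewrite !dist_refl; lra.
  - assert (Hpos : 0 < Defs.dist M x y) by (pose proof (Defs.dist_nonneg M x y); lra).
    assert (Hratio : Defs.dist M (f lam x) (f lam y) / Defs.dist M x y <= beta).
    { apply Hub; exists lam, x, y; split; [|reflexivity].
      intros ->; apply Hxy, dist_refl. }
    apply Rmult_le_reg_r with (/ Defs.dist M x y); [now apply Rinv_0_lt_compat|].
    replace (Rmax beta 0 * Defs.dist M x y * / Defs.dist M x y) with (Rmax beta 0)
      by (field; lra).
    pose proof (Rmax_l beta 0); unfold Rdiv in Hratio; lra.
Qed.

Lemma rsum_linear_recursion_bound (b : R) (D e : nat -> R) :
  D 0%nat = 0 -> (forall i, 0 <= D i) ->
  (forall i, D (S i) <= b * D i + e i) ->
  forall n, (1 - b) * rsum D n <= rsum e n.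
Proof.
  intros HD0 HDpos Hrec.
  assert (Hshift : forall n, rsum D (S n) <= b * rsum D n + rsum e n).
  { induction n as [|n IH]; simpl in *; [rewrite HD0; lra|].
    specialize (Hrec n); lra. }
  intro n; specialize (Hshift n); simpl in Hshift.
  specialize (HDpos n); lra.
Qed.

Lemma Fsigma_tracking (M : MetricSpace) (Lam : Type) (f : Lam -> M -> M)
    (b : R) (sigma : nat -> Lam) (xs : nat -> M) (z : M) :
  (forall lam x y, Defs.dist M (f lam x) (f lam y) <= b * Defs.dist M x y) ->
  forall i,
    Defs.dist M (Fsigma M Lam f sigma (S i) z) (xs (S i)) <=
    b * Defs.dist M (Fsigma M Lam f sigma i z) (xs i) +
    Defs.dist M (f (sigma i) (xs i)) (xs (S i)).
Proof.
  intros Hlip i; simpl.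
  eapply Rle_trans; [apply Defs.dist_tri with (y := f (sigma i) (xs i))|].
  specialize (Hlip (sigma i) (Fsigma M Lam f sigma i z) (xs i)); lra.
Qed.

Lemma LimSup_seq_le_eventually (u : nat -> R) (c : R) (N : nat) :
  (forall n, (N <= n)%nat -> u n <= c) -> Rbar_le (LimSup_seq u) c.
Proof.
  intros Hu.
  replace (Finite c) with (LimSup_seq (fun _ => c))
    by apply is_LimSup_seq_unique, is_LimSup_seq_const.
  apply LimSup_le; exists N; exact Hu.
Qed.

Theorem mainTheorem2 (M : MetricSpace) (Lam : Type) (f : Lam -> M -> M)
  (Hcomplete : complete M)
  (Hfin : finite_nonempty Lam)
  (Hcont : forall lam, metric_continuous M (f lam))
  (Hcontr : uniformly_contracting M Lam f) :
  average_shadowing M Lam f.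
Proof.
  destruct (uniformly_contracting_lipschitz M Lam f Hcontr) as [b [Hb Hlip]].
  intros eps Heps; exists (eps * (1 - b) / 2).
  split; [apply Rmult_lt_0_compat; [apply Rmult_lt_0_compat|]; lra|].
  intros xs [N [sigma Hpseudo]]; exists (xs 0%nat), sigma.
  set (D := fun i => Defs.dist M (Fsigma M Lam f sigma i (xs 0%nat)) (xs i)).
  set (e := fun i => Defs.dist M (f (sigma i) (xs i)) (xs (S i))).
  assert (Hsum : forall n, (1 - b) * rsum D n <= rsum e n).
  { apply rsum_linear_recursion_bound;
      [apply dist_refl | intro; apply Defs.dist_nonneg
      | exact (Fsigma_tracking M Lam f b sigma xs (xs 0%nat) Hlip)]. }
  assert (Havg : Rbar_le (LimSup_seq (fun n => / INR n * rsum D n)) (eps / 2)).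
  { apply LimSup_seq_le_eventually with (N := S N); intros n Hn.
    specialize (Hpseudo n ltac:(lia)); fold e in Hpseudo.
    specialize (Hsum n).
    assert (Hinv : 0 < / INR n) by (apply Rinv_0_lt_compat, lt_0_INR; lia).
    apply Rmult_le_reg_l with (1 - b); [lra|].
    replace ((1 - b) * (/ INR n * rsum D n)) with (/ INR n * ((1 - b) * rsum D n))
      by ring.
    apply Rmult_le_compat_l with (r := / INR n) in Hsum; lra. }
  fold D; destruct (LimSup_seq (fun n => / INR n * rsum D n));
    simpl in *; auto; lra.
Qed.
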